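(* Let $G\in\mathcal{G}_{2n}$ with $F(G)=n-1$. Then $G\in\mathcal{K}^+_{n,n}$ if and only if $G$ contains an independent set of size $n$. If $G\notin\mathcal{K}^+_{n,n}$, then $G$ is a brick, and hence $G$ is $1$-extendable.
   Context: All graphs are finite and simple. $\mathcal{G}_{2n}$ denotes the set of all graphs with $2n$ vertices that have a perfect matching. For a perfect matching $M$ of $G$, a forcing set of $M$ is a subset $S\subseteq M$ contained in no other perfect matching of $G$; $f(G,M)$ is the minimum size of a forcing set of $M$, and $F(G)$ is the maximum of $f(G,M)$ over all perfect matchings $M$. $\mathcal{K}^+_{n,n}$ is the family of graphs obtained from the complete bipartite graph $K_{n,n}$ by adding arbitrary (possibly no) additional edges whose both ends lie in the same one of the two partite sets (all added edges within one fixed partite set). A graph is bicritical if it has an edge and $G-u-v$ has a perfect matching for every pair of distinct vertices $u,v$; a brick is a $3$-connected bicritical graph. A connected graph with at least $2l+2$ vertices is $l$-extendable if it has a perfect matching and every matching of size $l$ is contained in a perfect matching. *)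

From mathcomp Require Import all_boot.
Set Implicit Arguments. Unset Strict Implicit. Unset Printing Implicit Defensive.

Section Graphs.
Variable T : finType.
Variable e : rel T.

Definition simple_graph : Prop := symmetric e /\ irreflexive e.

Definition is_edge (E : {set T}) : bool :=
  [exists x, exists y, e x y && (E == [set x; y])].

(* M is a perfect matching of the subgraph induced by X *)
Definition matching_of (X : {set T}) (M : {set {set T}}) : bool :=
  [&& [forall E in M, is_edge E], trivIset M & cover M == X].

Definition perfect_matching (M : {set {set T}}) : bool := matching_of setT M.

Definition has_perfect_matching : Prop := exists M, perfect_matching M.

Definition forcing_set (M S : {set {set T}}) : bool :=
  (S \subset M) &&
  [forall M' : {set {set T}}, (perfect_matching M' && (S \subset M')) ==> (M' == M)].

(* f(G,M): minimum size of a forcing set of M (M itself is one) *)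
Definition forcing_number (M : {set {set T}}) : nat :=
  \big[minn/#|M|]_(S : {set {set T}} | forcing_set M S) #|S|.

Definition max_forcing_number : nat :=
  \max_(M : {set {set T}} | perfect_matching M) forcing_number M.

Definition independent (S : {set T}) : bool :=
  [forall x in S, forall y in S, ~~ e x y].

(* G belongs to K^+_{n,n}: there is a bipartition (A,B) with |A|=|B|=n,
   all A-B pairs adjacent, and no edges inside B (extra edges only inside A). *)
Definition in_Kplus (n : nat) : Prop :=
  exists A : {set T}, [/\ #|A| = n, #|~: A| = n,
    (forall a b, a \in A -> b \in ~: A -> e a b) &
    (forall b b', b \in ~: A -> b' \in ~: A -> ~~ e b b')].

Definition connected_on (X : {set T}) : Prop :=
  forall x y, x \in X -> y \in X ->
    connect [rel u v | [&& e u v, u \in X & v \in X]] x y.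

Definition connected : Prop := connected_on setT.

Definition k_connected (k : nat) : Prop :=
  k < #|T| /\ forall S : {set T}, #|S| < k -> connected_on (~: S).

Definition bicritical : Prop :=
  (exists x y, e x y) /\
  forall u v, u != v -> exists M, matching_of (~: [set u; v]) M.

Definition brick : Prop := k_connected 3 /\ bicritical.

Definition one_extendable : Prop :=
  [/\ connected, 4 <= #|T|, has_perfect_matching &
      forall E, is_edge E -> exists M, perfect_matching M /\ E \in M].

End Graphs.

From mathcomp Require Import all_boot zify.
Set Implicit Arguments. Unset Strict Implicit. Unset Printing Implicit Defensive.

(* Let G have 2n vertices and a perfect matching M with f(G, M) = F(G) = n - 1.
   Perfect matchings are handled through their pairings (fixed-point-free
   involutions p, with p t the partner of t).

   1. If two blocks {a, p a}, {c, p c} of M did not span an alternating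
      4-cycle, the n - 2 other blocks would force M; hence every two pairs of
      p span an alternating 4-cycle ("p is squared").
   2. For a squared pairing p:
      - an independent set of size n meets every pair, and then the pairs
        give the bipartition witnessing G in K+_{n,n};
      - if there is no independent set of size n, any two vertices u, v can
        be "rematched": there is a pairing q with q u = v whose other pairs
        are edges.  It is obtained from p by pairing u with v and moving the
        defect {p u, p v} along an alternating path of length 1, 3 or 5; if
        no such path exists, p u, p v and the vertices of the other pairs
        that are not adjacent to p u form an independent set of size n.
   3. Rematching gives bicriticality and 1-extendability; 3-connectivity
      follows since every vertex is adjacent to a vertex of every other pair.
*)

Lemma bigmin_le_seq (I : eqType) (s : seq I) (P : pred I) (F : I -> nat) x i0 :
  i0 \in s -> P i0 -> \big[minn/x]_(i <- s | P i) F i <= F i0.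
Proof.
elim: s => //= i s IH; rewrite in_cons big_cons => /orP [/eqP <- ->|].
  exact: geq_minl.
move=> /IH H /H {}H; case: (P i) => //; exact: leq_trans (geq_minr _ _) H.
Qed.

Lemma bigmin_le (I : finType) (P : pred I) (F : I -> nat) x i0 :
  P i0 -> \big[minn/x]_(i | P i) F i <= F i0.
Proof. by move=> H; apply: bigmin_le_seq => //; rewrite mem_index_enum. Qed.

Section Pairings.
Variable T : finType.

(* A pairing is a fixed-point-free involution; its orbits are the pairs
   {t, q t}. *)
Definition pairing (q : T -> T) : Prop := involutive q /\ forall t, q t != t.

Lemma pairing_eq (q : T -> T) x y : involutive q -> (q x == y) = (x == q y).
Proof. by move=> qK; rewrite -(inj_eq (inv_inj qK)) qK. Qed.

Lemma pairing_quad (q : T -> T) a c t : involutive q ->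
  (q t \in [:: a; q a; c; q c]) = (t \in [:: a; q a; c; q c]).
Proof.
move=> qK; rewrite !inE !(pairing_eq _ _ qK) !qK.
by case: (t == a); case: (t == q a); case: (t == c); case: (t == q c).
Qed.

Lemma pair_of_mem (q : T -> T) t z : involutive q ->
  z \in [set t; q t] -> [set t; q t] = [set z; q z].
Proof. by move=> qK; rewrite !inE => /orP [] /eqP ->; rewrite ?qK 1?setUC. Qed.

Lemma matching_of_pairing (e : rel T) (X : {set T}) (q : T -> T) :
  pairing q -> {in X, forall t, q t \in X} -> {in X, forall t, e t (q t)} ->
  matching_of e X [set [set t; q t] | t in X].
Proof.
move=> [qK _] qX qE; apply/and3P; split.
- apply/forallP => E; apply/implyP => /imsetP [t tX ->]; rewrite /is_edge.
  by apply/existsP; exists t; apply/existsP; exists (q t); rewrite qE ?eqxx.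
- apply/trivIsetP => A B /imsetP [t tX ->] /imsetP [s sX ->] neq.
  rewrite disjoint_subset; apply/subsetP => z zA; rewrite inE; apply/negP => zB.
  by move/negP: neq; apply; rewrite (pair_of_mem qK zA) (pair_of_mem qK zB).
- rewrite cover_imset; apply/eqP/setP => z; apply/bigcupP/idP.
    by case=> t tX; rewrite !inE => /orP [] /eqP ->; rewrite ?qX.
  by move=> zX; exists z => //; rewrite !inE eqxx.
Qed.

(* Re-pairing x with y: the pairs {x, q x} and {y, q y} become {x, y} and
   {q x, q y}; every other pair is kept. *)
Definition swap (q : T -> T) x y t :=
  if t == x then y else if t == y then x else if t == q x then q y
  else if t == q y then q x else q t.

Lemma swap_pairing q x y : pairing q -> y != x -> y != q x -> pairing (swap q x y).
Proof.
move=> [qK qN] yx yqx; have qinj := inv_inj qK.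
have qxx : q x != x by [].
have qyy : q y != y by [].
have qyx : q y != x by rewrite pairing_eq.
have qyqx : q y != q x by rewrite (inj_eq qinj).
have qxy : q x != y by rewrite eq_sym.
split => t; rewrite /swap.
- case: (t =P x) => [->|tx]; first by rewrite (negbTE yx) eqxx.
  case: (t =P y) => [->|ty]; first by rewrite eqxx.
  case: (t =P q x) => [->|tqx].
    by rewrite (negbTE qyx) (negbTE qyy) (negbTE qyqx) eqxx.
  case: (t =P q y) => [->|tqy]; first by rewrite (negbTE qxx) (negbTE qxy) eqxx.
  have qtx : q t != x by rewrite pairing_eq //; apply/eqP.
  have qty : q t != y by rewrite pairing_eq //; apply/eqP.
  have qtqx : q t != q x by rewrite (inj_eq qinj); apply/eqP.
  have qtqy : q t != q y by rewrite (inj_eq qinj); apply/eqP.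
  by rewrite (negbTE qtx) (negbTE qty) (negbTE qtqx) (negbTE qtqy) qK.
- case: (t =P x) => [->|tx]; first exact: yx.
  case: (t =P y) => [->|ty]; first by rewrite eq_sym.
  case: (t =P q x) => [->|tqx]; first exact: qyqx.
  case: (t =P q y) => [->|tqy]; first by rewrite eq_sym.
  exact: qN.
Qed.

Lemma swap_x q x y : swap q x y x = y.
Proof. by rewrite /swap eqxx. Qed.

Lemma swap_y q x y : y != x -> swap q x y y = x.
Proof. by move=> h; rewrite /swap (negbTE h) eqxx. Qed.

Lemma swap_qx q x y : q x != x -> q x != y -> swap q x y (q x) = q y.
Proof. by move=> h1 h2; rewrite /swap (negbTE h1) (negbTE h2) eqxx. Qed.

Lemma swap_qy q x y : q y != x -> q y != y -> q y != q x -> swap q x y (q y) = q x.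
Proof. by move=> h1 h2 h3; rewrite /swap (negbTE h1) (negbTE h2) (negbTE h3) eqxx. Qed.

Lemma swap_other q x y t : t \notin [:: x; y; q x; q y] -> swap q x y t = q t.
Proof.
rewrite !inE !negb_or => /and4P [h1 h2 h3 h4].
by rewrite /swap (negbTE h1) (negbTE h2) (negbTE h3) (negbTE h4).
Qed.

End Pairings.

Section Partner.
Variable T : finType.
Variable e : rel T.
Hypothesis sym_e : symmetric e.
Hypothesis irr_e : irreflexive e.
Variable M : {set {set T}}.
Hypothesis pmM : perfect_matching e M.

Definition partner (x : T) : T :=
  odflt x [pick y | (y != x) && ([set x; y] \in M)].

Lemma matching_block B : B \in M -> exists x y, [/\ e x y, x != y & B = [set x; y]].
Proof.
case/and3P: pmM => /forallP /(_ B) + _ _ BM; rewrite BM /=.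
case/existsP => x /existsP [y /andP [exy /eqP ->]].
by exists x, y; split => //; apply/eqP => E; rewrite E irr_e in exy.
Qed.

Lemma matching_uniq x y z : [set x; y] \in M -> [set x; z] \in M -> y != x -> y = z.
Proof.
case/and3P: pmM => _ /trivIsetP tM _ A B yx.
have E : [set x; y] = [set x; z].
  apply/eqP; apply: contraT => /(tM _ _ A B); rewrite disjoint_subset.
  by move=> /subsetP /(_ x); rewrite !inE eqxx => /(_ isT).
have : y \in [set x; z] by rewrite -E !inE eqxx orbT.
by rewrite !inE (negbTE yx) => /eqP.
Qed.

Lemma partner_spec x : partner x != x /\ [set x; partner x] \in M.
Proof.
have : x \in cover M by case/and3P: pmM => _ _ /eqP ->; rewrite inE.
case/bigcupP => B BM xB.
have [y yx yM] : exists2 y, y != x & [set x; y] \in M.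
  have [a [b [_ ab EB]]] := matching_block BM.
  move: xB; rewrite EB !inE => /orP [] /eqP ->.
    by exists b; rewrite 1?eq_sym -?EB.
  by exists a; rewrite // setUC -EB.
rewrite /partner; case: pickP => [z /andP [-> ->] //|/(_ y)].
by rewrite yx yM.
Qed.

Lemma partner_uniq x y : y != x -> [set x; y] \in M -> y = partner x.
Proof. by move=> yx yM; apply: matching_uniq yM (partner_spec x).2 yx. Qed.

Lemma partner_pairing : pairing partner.
Proof.
split => x; last by case: (partner_spec x).
have [xx xM] := partner_spec x; symmetry; apply: partner_uniq.
  by rewrite eq_sym.
by rewrite setUC.
Qed.

Lemma partner_block B : B \in M -> exists x, B = [set x; partner x].
Proof.
move=> BM; have [a [b [_ ab EB]]] := matching_block BM; exists a.
by rewrite -(@partner_uniq a b) -?EB // eq_sym.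
Qed.

Lemma partner_edge x : e x (partner x).
Proof.
have [] := partner_spec x; move: (partner x) => y yx yM.
have [a [b [eab ab EB]]] := matching_block yM.
have hx : x \in [set a; b] by rewrite -EB set21.
have hy : y \in [set a; b] by rewrite -EB set22.
rewrite !inE in hx hy; move: yx.
by case/orP: hx => /eqP ->; case/orP: hy => /eqP ->; rewrite ?eqxx // sym_e.
Qed.

Lemma matching_card : 2 * #|M| = #|T|.
Proof.
case/and3P: pmM => _ + /eqP cM; rewrite /trivIset cM cardsT => /eqP <-.
rewrite (eq_bigr (fun _ => 2)); first by rewrite sum_nat_const mulnC.
by move=> B /matching_block [a [b [_ ab ->]]]; rewrite cards2 ab.
Qed.

End Partner.

Lemma matching_eq (T : finType) (e : rel T) (M M' : {set {set T}}) :
  irreflexive e -> perfect_matching e M -> perfect_matching e M' ->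
  partner M =1 partner M' -> M = M'.
Proof.
move=> irr_e pm pm' E; apply/setP => B; apply/idP/idP => BM.
  have [x ->] := partner_block irr_e pm BM; rewrite E; exact: (partner_spec irr_e pm' x).2.
have [x ->] := partner_block irr_e pm' BM; rewrite -E; exact: (partner_spec irr_e pm x).2.
Qed.

Lemma pairing_on_quad (T : finType) (p q : T -> T) a c :
  pairing p -> pairing q -> c \notin [:: a; p a] ->
  {in [:: a; p a; c; p c], forall t, q t \in [:: a; p a; c; p c]} ->
  [\/ {in [:: a; p a; c; p c], q =1 p},
      q a = c /\ q (p a) = p c | q a = p c /\ q (p a) = c].
Proof.
move=> [pK pN] [qK qN]; rewrite !inE negb_or => /andP [ca cpa] qs.
have qinj := inv_inj qK.
have apa : p a != a := pN a.
have pca : p c != a by rewrite pairing_eq.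
have pcpa : p c != p a by rewrite (inj_eq (inv_inj pK)).
have := qs a; rewrite !inE eqxx => /(_ isT) /or4P [] /eqP Ea.
- by move: (qN a); rewrite Ea eqxx.
- have Ec : q c = p c.
    have := qs c; rewrite !inE eqxx !orbT => /(_ isT) /or4P [] /eqP E //.
    + by move: cpa; rewrite -Ea -E qK eqxx.
    + by move: ca; rewrite (qinj c a) ?eqxx // E Ea.
    + by move: (qN c); rewrite E eqxx.
  apply: Or31 => t; rewrite !inE => /or4P [] /eqP -> //.
  + by rewrite pK -Ea qK.
  + by rewrite pK -Ec qK.
- have := qs (p a); rewrite !inE eqxx !orbT => /(_ isT) /or4P [] /eqP E.
  + by move: cpa; rewrite -Ea -[p a]qK E eqxx.
  + by move: (qN (p a)); rewrite E eqxx.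
  + by move: apa; rewrite -[p a]qK E -Ea qK eqxx.
  + by apply: Or32.
- have := qs (p a); rewrite !inE eqxx !orbT => /(_ isT) /or4P [] /eqP E.
  + by move: pcpa; rewrite -Ea -[p a]qK E eqxx.
  + by move: (qN (p a)); rewrite E eqxx.
  + by apply: Or33.
  + by move: apa; rewrite -[p a]qK E -Ea qK eqxx.
Qed.

(* The pairs {a, p a} and {c, p c} span an alternating 4-cycle: the two
   other ways of pairing these four vertices consist of edges for one of them. *)
Definition alt_square (T : finType) (e : rel T) (p : T -> T) (a c : T) : bool :=
  (e a c && e (p a) (p c)) || (e a (p c) && e (p a) c).

Definition squared (T : finType) (e : rel T) (p : T -> T) : Prop :=
  forall a c, c \notin [:: a; p a] -> alt_square e p a c.

Section MaximumForcing.
Variable T : finType.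
Variable e : rel T.
Hypothesis sym_e : symmetric e.
Hypothesis irr_e : irreflexive e.
Variable M : {set {set T}}.
Hypothesis pmM : perfect_matching e M.
Local Notation p := (partner M).

Definition off_square (a c : T) : {set {set T}} :=
  [set B in M | (a \notin B) && (c \notin B)].

(* Unless the blocks of a and c span an alternating 4-cycle, the other
   blocks of M force M: a perfect matching containing them agrees with M off
   these four vertices, hence re-pairs them, along an alternating 4-cycle. *)
Lemma off_square_forcing a c : c \notin [:: a; p a] -> ~~ alt_square e p a c ->
  forcing_set e M (off_square a c).
Proof.
move=> hc hne; apply/andP; split; first by apply/subsetP => B; rewrite inE => /andP [].
apply/forallP => M'; apply/implyP => /andP [pm' SM'].
have pP := partner_pairing irr_e pmM; have [pK pN] := pP.
have qP := partner_pairing irr_e pm'; have [qK _] := qP.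
set q := partner M' in qK qP *.
set s := [:: a; p a; c; p c].
have off t : t \notin s -> q t = p t.
  rewrite !inE !negb_or => /and4P [ta tpa tc tpc].
  have tS : [set t; p t] \in off_square a c.
    rewrite inE (partner_spec irr_e pmM t).2 !inE !negb_or ![a == _]eq_sym ![c == _]eq_sym.
    by rewrite ta tc !(pairing_eq _ _ pK) tpa tpc.
  by apply/esym/(partner_uniq irr_e pm' (pN t)); apply: (subsetP SM').
have qs : {in s, forall t, q t \in s}.
  move=> t ts; apply: contraT => hs.
  by move: ts; rewrite -[t]qK (off _ hs) (pairing_quad _ _ _ pK) (negbTE hs).
have qE := partner_edge sym_e irr_e pm'.
case: (pairing_on_quad pP qP hc qs) => [Eq | [E1 E2] | [E1 E2]].
- apply/eqP; symmetry; apply: matching_eq => // t.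
  by case: (boolP (t \in s)) => ts; [exact/esym/Eq | exact/esym/off].
- by move/negP: hne; case; rewrite /alt_square -E2 -E1 !qE.
- by move/negP: hne; case; rewrite /alt_square -E1 -E2 !qE orbT.
Qed.

Lemma off_square_card a c : c \notin [:: a; p a] -> (#|off_square a c|).+2 <= #|M|.
Proof.
rewrite !inE negb_or => /andP [ca cpa].
have Ma := (partner_spec irr_e pmM a).2; have Mc := (partner_spec irr_e pmM c).2.
have Mc' : [set c; p c] \in M :\ [set a; p a].
  rewrite !inE Mc andbT; apply/eqP => E.
  have : c \in [set a; p a] by rewrite -E set21.
  by rewrite !inE (negbTE ca) (negbTE cpa).
have sub : off_square a c \subset (M :\ [set a; p a]) :\ [set c; p c].
  apply/subsetP => B; rewrite !inE => /and3P [BM aB cB]; rewrite BM andbT.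
  by apply/andP; split; apply/eqP => E; rewrite E !inE eqxx ?orbT // in aB cB.
have := subset_leq_card sub.
by rewrite (cardsD1 [set a; p a] M) Ma (cardsD1 [set c; p c]) Mc'.
Qed.

(* If f(G, M) >= n - 1 (with 2n vertices), then any two blocks of M span
   an alternating 4-cycle: otherwise the n - 2 other blocks force M. *)
Lemma alternating_squares n : #|T| = 2 * n -> n - 1 <= forcing_number e M ->
  squared e p.
Proof.
move=> cT fn a c hc; apply: contraT => hne.
have h1 : forcing_number e M <= #|off_square a c|.
  have fS := off_square_forcing hc hne.
  by rewrite /forcing_number (@bigmin_le _ (forcing_set e M) (fun S => #|S|) _ _ fS).
have := off_square_card hc; have := matching_card irr_e pmM; lia.
Qed.

End MaximumForcing.

Section Rematching.
Variable T : finType.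
Variable e : rel T.
Hypothesis sym_e : symmetric e.
Variables u v : T.

(* q is a perfect matching of G - u - v, extended by pairing u with v. *)
Definition rematching (q : T -> T) : Prop :=
  [/\ pairing q, q u = v & forall t, t \notin [:: u; v] -> e t (q t)].

Definition almost_rematching (x : T) (q : T -> T) : Prop :=
  [/\ pairing q, q u = v, x \notin [:: u; v] &
      forall t, t \notin [:: u; v; x; q x] -> e t (q t)].

Lemma rematching_done x q : almost_rematching x q -> e x (q x) -> rematching q.
Proof.
move=> [qP qu _ qE] exq; have [qK _] := qP.
split=> // t; rewrite !inE negb_or => /andP [tu tv].
case: (t =P x) => [-> //|tx]; case: (t =P q x) => [->|tqx]; first by rewrite qK sym_e.
by apply: qE; rewrite !inE !negb_or tu tv /=; apply/andP; split; apply/eqP.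
Qed.

(* Pairing u with v in a perfect matching p leaves the defect {p v, p u}. *)
Lemma almost_start p : pairing p -> (forall t, e t (p t)) -> u != v -> v != p u ->
  almost_rematching (p v) (swap p u v) /\ swap p u v (p v) = p u.
Proof.
move=> pP pE uv vpu; have [pK pN] := pP.
have vu : v != u by rewrite eq_sym.
have pvu : p v != u by rewrite pairing_eq.
have pvpu : p v != p u by rewrite (inj_eq (inv_inj pK)).
have q1pv : swap p u v (p v) = p u by rewrite swap_qy.
split=> //; split; rewrite ?swap_x ?q1pv //; first exact: swap_pairing.
  by rewrite !inE negb_or pvu pN.
move=> t; rewrite !inE !negb_or => /and4P [tu tv tpv tpu].
by rewrite swap_other ?pE // !inE !negb_or tu tv tpu tpv.
Qed.

(* Moving the defect along an edge q x -- y: re-pair q x with y; the new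
   defect is {x, q y}. *)
Lemma almost_step x q y : almost_rematching x q ->
  y \notin [:: u; v; x; q x] -> e (q x) y ->
  almost_rematching x (swap q (q x) y) /\ swap q (q x) y x = q y.
Proof.
move=> [qP qu xuv qE]; have [qK qN] := qP.
rewrite !inE !negb_or => /and4P [yu yv yx yqx] eqxy.
move: xuv; rewrite !inE negb_or => /andP [xu xv].
have rx : swap q (q x) y x = q y.
  by have := @swap_qx _ q (q x) y; rewrite qK; apply; rewrite eq_sym.
split=> //; split=> //.
- by apply: swap_pairing; rewrite ?qK.
- have uqx : u != q x by rewrite eq_sym pairing_eq // qu.
  have uqy : u != q y by rewrite eq_sym pairing_eq // qu.
  by rewrite swap_other // !inE !negb_or qK uqx uqy ![u == _]eq_sym yu xu.
- by rewrite !inE negb_or xu.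
move=> t; rewrite rx !inE !negb_or => /and4P [tu tv tx tqy].
case: (t =P q x) => [->|tqx]; first by rewrite swap_x.
case: (t =P y) => [->|ty]; first by rewrite swap_y // sym_e.
rewrite swap_other; last first.
  by rewrite !inE !negb_or qK tx tqy !andbT; apply/andP; split; apply/eqP.
by apply: qE; rewrite !inE !negb_or tu tv tx; apply/eqP.
Qed.

Lemma rematching_closed q : rematching q ->
  {in ~: [set u; v], forall t, q t \in ~: [set u; v]}.
Proof.
move=> [[qK _] qu _] t; rewrite !inE !negb_or => /andP [tu tv].
by rewrite -qu (inj_eq (inv_inj qK)) tu -[u]qK qu (inj_eq (inv_inj qK)) tv.
Qed.

End Rematching.

Lemma independentP (T : finType) (e : rel T) (S : {set T}) :
  independent e S -> {in S &, forall x y, ~~ e x y}.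
Proof.
by move=> /forallP ind x y xS; move: (ind x); rewrite xS => /forallP /(_ y) /implyP.
Qed.

Section SquaredPairing.
Variable T : finType.
Variable e : rel T.
Hypothesis sym_e : symmetric e.
Hypothesis irr_e : irreflexive e.
Variable p : T -> T.
Hypothesis pP : pairing p.
Hypothesis pE : forall t, e t (p t).
Hypothesis pS : squared e p.
Variable n : nat.
Hypothesis cT : #|T| = 2 * n.

Let pK : involutive p := pP.1.
Let pN : forall t, p t != t := pP.2.
Let pinj : injective p := inv_inj pK.
Let peq x y : (p x == y) = (x == p y) := pairing_eq x y pK.

Lemma adjacent_to_pair x y : y \notin [:: x; p x] -> e x y || e x (p y).
Proof. by move/pS => /orP [] /andP [-> _]; rewrite ?orbT. Qed.

Lemma mem_imset_pairing (S : {set T}) t : (t \in p @: S) = (p t \in S).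
Proof.
apply/imsetP/idP => [[s sS ->]|h]; first by rewrite pK.
by exists (p t); rewrite ?pK.
Qed.

Lemma card_transversal (S : {set T}) : (forall t, (p t \in S) = (t \notin S)) -> #|S| = n.
Proof.
move=> H; have E : p @: S = ~: S by apply/setP => t; rewrite mem_imset_pairing inE H.
have := card_imset S pinj; rewrite E; have := cardsC S; lia.
Qed.

Lemma transversal_of_card (S : {set T}) : {in S, forall t, p t \notin S} -> #|S| = n ->
  forall t, (t \in S) || (p t \in S).
Proof.
move=> H cS t.
have D : S :&: p @: S = set0.
  apply/setP => x; rewrite !inE mem_imset_pairing; apply/negP => /andP [h1 h2].
  by move: (H x h1); rewrite h2.
have := cardsU S (p @: S); rewrite D cards0 subn0 (card_imset S pinj) => h1.
have : S :|: p @: S == setT.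
  by rewrite eqEcard subsetT cardsT h1 cS cT mul2n -addnn leqnn.
by move/eqP/setP/(_ t); rewrite !inE mem_imset_pairing.
Qed.

(* An independent set B of size n meets every pair, and every vertex of the
   complement A is adjacent to every vertex of B: G is in K+_{n,n}. *)
Lemma kplus_of_independent (S : {set T}) : independent e S -> #|S| = n -> in_Kplus e n.
Proof.
move=> /independentP ind cS.
have H1 : {in S, forall t, p t \notin S}.
  by move=> t tS; apply/negP => ptS; move: (ind _ _ tS ptS); rewrite pE.
have H2 := transversal_of_card H1 cS.
exists (~: S); rewrite setCK; split => //.
- by have := cardsC S; lia.
- move=> a b; rewrite inE => aS bS.
  have paS : p a \in S by move: (H2 a); rewrite (negbTE aS).
  case: (b =P p a) => [-> //|bpa].
  have hb : b \notin [:: a; p a].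
    rewrite !inE negb_or; apply/andP; split; last by apply/eqP.
    by apply/eqP => E; move: aS; rewrite -E bS.
  case/orP: (pS hb) => /andP [eab epab]; first exact: eab.
  by move: (ind _ _ paS bS); rewrite epab.
Qed.

Lemma kplus_iff_independent :
  in_Kplus e n <-> exists S : {set T}, independent e S /\ #|S| = n.
Proof.
split; last by case=> S [iS cS]; apply: kplus_of_independent iS cS.
case=> A [_ cCA _ hB]; exists (~: A); split => //.
by apply/forallP => x; apply/implyP => xA; apply/forallP => y; apply/implyP; apply: hB.
Qed.

(* Re-pairing u with v and repairing the defect along an alternating path
   of length 1, 3 (p u -- z ~ p z -- p v) or 5 (p u -- z ~ p z -- p w ~ w -- p v)
   yields a perfect matching of G - u - v. *)
Section RematchAlongPath.
Variables u v : T.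
Hypothesis uv : u != v.
Hypothesis vpu : v != p u.
Local Notation q1 := (swap p u v).

Let start : almost_rematching e u v (p v) q1 /\ q1 (p v) = p u.
Proof. exact: almost_start. Qed.

Let start_off t : t \notin [:: u; p u; v; p v] -> q1 t = p t.
Proof.
rewrite !inE !negb_or => /and4P [tu tpu tv tpv].
by rewrite swap_other // !inE !negb_or tu tv tpu tpv.
Qed.

Local Notation q2 z := (swap q1 (q1 (p v)) z).

(* Moving the defect {p v, p u} along p u -- z gives the defect {p v, p z}. *)
Let first_step z : z \notin [:: u; p u; v; p v] -> e (p u) z ->
  almost_rematching e u v (p v) (q2 z) /\ q2 z (p v) = p z.
Proof.
move=> hz e1; have [A1 q1pv] := start.
have hz' : z \notin [:: u; v; p v; q1 (p v)].
  by move: hz; rewrite q1pv !inE !negb_or => /and4P [-> -> -> ->].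
have e1' : e (q1 (p v)) z by rewrite q1pv.
by have [A2 ->] := almost_step sym_e A1 hz' e1'; split; last rewrite start_off.
Qed.

Lemma rematch_path1 : e (p u) (p v) -> exists q, rematching e u v q.
Proof.
by move=> h; exists q1; apply: (rematching_done sym_e start.1); rewrite start.2 sym_e.
Qed.

Lemma rematch_path3 z : z \notin [:: u; p u; v; p v] -> e (p u) z -> e (p z) (p v) ->
  exists q, rematching e u v q.
Proof.
move=> hz e1 e2; have [A2 q2pv] := first_step hz e1.
by exists (q2 z); apply: (rematching_done sym_e A2); rewrite q2pv sym_e.
Qed.

Lemma rematch_path5 z w : z \notin [:: u; p u; v; p v] -> w \notin [:: u; p u; v; p v] ->
  w \notin [:: z; p z] -> e (p u) z -> e (p z) (p w) -> e w (p v) ->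
  exists q, rematching e u v q.
Proof.
move=> hz hw hwz e1 e2 e3; have [A2 q2pv] := first_step hz e1.
move: hw hwz; rewrite !inE !negb_or => /and4P [wu wpu wv wpv] /andP [wz wpz].
have hpw : p w \notin [:: u; v; p v; q2 z (p v)].
  by rewrite q2pv !inE !(inj_eq pinj) !peq !negb_or wpu wpv wv wz.
have e2' : e (q2 z (p v)) (p w) by rewrite q2pv.
have [A3 q3pv] := almost_step sym_e A2 hpw e2'.
have q1pu : q1 (p u) = p v by rewrite swap_qx // eq_sym.
have q2pw : q2 z (p w) = w.
  rewrite start.2 swap_other; last first.
    by rewrite q1pu start_off // !inE !(inj_eq pinj) !peq !negb_or wu wpz wv wz.
  by rewrite start_off ?pK // !inE !(inj_eq pinj) !peq !negb_or wu wpu wv wpv.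
by eexists; apply: (rematching_done sym_e A3); rewrite q3pv q2pw sym_e.
Qed.
End RematchAlongPath.

Section NoIndependentHalf.
Hypothesis no_indep : forall S : {set T}, independent e S -> #|S| = n -> False.

(* The obstruction to re-pairing u with v: no alternating path of length
   1, 3 or 5 from p u to p v.  Then the set [blocker] below, consisting of
   p u, p v and of the vertex of each other pair non-adjacent to p u, is an
   independent set of size n. *)
Section Blocked.
Variables u v : T.
Hypothesis vpu : v != p u.
Let quad := [:: u; p u; v; p v].
Hypothesis no_path1 : ~~ e (p u) (p v).
Hypothesis no_path3 : forall z, z \notin quad -> e (p u) z -> e (p z) (p v) -> False.
Hypothesis no_path5 : forall z w, z \notin quad -> w \notin quad -> w \notin [:: z; p z] ->
  e (p u) z -> e (p z) (p w) -> e w (p v) -> False.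

Let quadP t : (p t \in quad) = (t \in quad) := pairing_quad u v t pK.

Lemma adjacent_off_quad t : t \notin quad ->
  (e (p u) t || e (p u) (p t)) /\ (e (p v) t || e (p v) (p t)).
Proof.
rewrite !inE !negb_or => /and4P [tu tpu tv tpv].
by split; apply: adjacent_to_pair; rewrite !inE pK negb_or ?tu ?tpu ?tv ?tpv.
Qed.

Lemma pu_one_side t : t \notin quad -> ~~ (e (p u) t && e (p u) (p t)).
Proof.
move=> ht; apply/negP => /andP [h1 h2]; have hpt : p t \notin quad by rewrite quadP.
case/orP: (adjacent_off_quad ht).2 => h3.
  by apply: (no_path3 hpt h2); rewrite pK sym_e.
by apply: (no_path3 ht h1); rewrite sym_e.
Qed.

Lemma pv_opposite t : t \notin quad -> e (p u) (p t) -> ~~ e (p v) t.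
Proof.
move=> ht h1; apply/negP => h2; have hpt : p t \notin quad by rewrite quadP.
by apply: (no_path3 hpt h1); rewrite pK sym_e.
Qed.

Definition blocker : {set T} :=
  [set t | [|| t == p u, t == p v | (t \notin quad) && e (p u) (p t)]].

Lemma blocker_transversal t : (p t \in blocker) = (t \notin blocker).
Proof.
have vpv : v != p v by rewrite eq_sym pN.
have upv : u != p v by rewrite eq_sym peq.
have uS : u \notin blocker by rewrite inE !negb_or eqxx /= andbT eq_sym pN upv.
have vS : v \notin blocker by rewrite inE !negb_or eqxx /= !andbF vpu vpv.
have puS : p u \in blocker by rewrite inE eqxx.
have pvS : p v \in blocker by rewrite inE eqxx orbT.
case: (boolP (t \in quad)) => ht.
  have : [|| t == u, t == p u, t == v | t == p v] by move: ht; rewrite !inE.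
  case/or4P => /eqP ->; rewrite ?pK ?puS ?pvS ?uS ?vS //.
    by rewrite (negbTE uS).
  by rewrite (negbTE vS).
have hpt : p t \notin quad by rewrite quadP.
have /and4P [tu tpu tv tpv] : [&& t != u, t != p u, t != v & t != p v].
  by move: ht; rewrite !inE !negb_or.
rewrite /blocker !in_set hpt ht pK !(inj_eq pinj).
rewrite (negbTE tu) (negbTE tv) (negbTE tpu) (negbTE tpv) /=.
(* both sides now say that p u is adjacent to t rather than to p t *)
by move: (adjacent_off_quad ht).1 (pu_one_side ht); case: (e (p u) t); case: (e (p u) (p t)).
Qed.

Lemma blocker_independent : independent e blocker.
Proof.
have Smem t : t \in blocker -> [\/ t = p u, t = p v | t \notin quad /\ e (p u) (p t)].
  by rewrite inE => /or3P [/eqP ->|/eqP ->|/andP []]; [constructor 1|constructor 2|constructor 3].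
apply/forallP => x; apply/implyP => /Smem hx; apply/forallP => y; apply/implyP => /Smem hy.
case: hx => [->|->|[hx ex]]; case: hy => [->|->|[hy ey]].
- by rewrite irr_e.
- exact: no_path1.
- by move: (pu_one_side hy); rewrite ey andbT.
- by rewrite sym_e.
- by rewrite irr_e.
- exact: pv_opposite.
- by move: (pu_one_side hx); rewrite ex andbT sym_e.
- by rewrite sym_e; apply: pv_opposite.
apply/negP => exy; have hpx : p x \notin quad by rewrite quadP.
have hpy : p y \notin quad by rewrite quadP.
have xy : x != y by apply: contraTneq exy => ->; rewrite irr_e.
have hw : p y \notin [:: p x; p (p x)].
  rewrite !inE negb_or pK (inj_eq pinj) eq_sym xy /=.
  by apply/eqP => E; move: (pu_one_side hx); rewrite ex andbT -E ey.
apply: (no_path5 hpx hpy hw ex); first by rewrite !pK.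
have := pv_opposite hy ey; case/orP: (adjacent_off_quad hy).2 => [->//|h _].
by rewrite sym_e.
Qed.

Lemma blocked : False.
Proof. exact: no_indep blocker_independent (card_transversal blocker_transversal). Qed.

End Blocked.

Lemma rematch u v : u != v -> exists q, rematching e u v q.
Proof.
move=> uv; case: (eqVneq v (p u)) => [->|vpu]; first by exists p; split.
case: (boolP (e (p u) (p v))) => [|no1]; first exact: rematch_path1.
case: (boolP [exists z, [&& z \notin [:: u; p u; v; p v], e (p u) z & e (p z) (p v)]]).
  by case/existsP => z /and3P [hz e1 e2]; apply: (rematch_path3 uv vpu hz e1 e2).
move=> /existsPn no3.
case: (boolP [exists z, exists w,
    [&& z \notin [:: u; p u; v; p v], w \notin [:: u; p u; v; p v], w \notin [:: z; p z],
        e (p u) z, e (p z) (p w) & e w (p v)]]).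
  case/existsP => z /existsP [w /and5P [hz hw hwz e1 /andP [e2 e3]]].
  exact: (rematch_path5 uv vpu hz hw hwz e1 e2 e3).
move=> /existsPn no5; exfalso; apply: (blocked vpu no1).
  by move=> z hz e1 e2; move: (no3 z); rewrite hz e1 e2.
move=> z w hz hw hwz e1 e2 e3; move/existsPn: (no5 z) => /(_ w).
by rewrite hz hw hwz e1 e2 e3.
Qed.

(* With n <= 1 the empty set or a single vertex is independent of size n. *)
Lemma half_gt1 : 1 < n.
Proof.
case: n no_indep cT => [|[|m]] // no_indep' cT'.
  by case: (no_indep' set0); rewrite ?cards0 //; apply/forallP => x; rewrite inE.
have /card_gt0P [x _] : 0 < #|T| by rewrite cT'.
case: (no_indep' [set x]); last by rewrite cards1.
by apply/forallP => a; apply/implyP; rewrite inE => /eqP ->; apply/forallP => b;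
  apply/implyP; rewrite inE => /eqP ->; rewrite irr_e.
Qed.

Lemma card_gt3 : 3 < #|T|.
Proof. by rewrite cT; have := half_gt1; lia. Qed.

Lemma reach_pair (S : {set T}) w : w \notin S -> p w \notin S ->
  forall a, a \notin S -> connect [rel x y | [&& e x y, x \in ~: S & y \in ~: S]] a w.
Proof.
move=> wS pwS a aS.
case: (eqVneq a w) => [->|aw]; first exact: connect0.
have pw_w : connect [rel x y | [&& e x y, x \in ~: S & y \in ~: S]] (p w) w.
  by apply: connect1; rewrite /= !inE pwS wS sym_e pE.
case: (eqVneq a (p w)) => [->|apw]; first exact: pw_w.
have hw : w \notin [:: a; p a] by rewrite !inE negb_or eq_sym aw -peq eq_sym apw.
case/orP: (adjacent_to_pair hw) => h.
  by apply: connect1; rewrite /= h !inE aS wS.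
by apply: connect_trans pw_w; apply: connect1; rewrite /= h !inE aS pwS.
Qed.

Lemma connected_avoiding (S : {set T}) : #|S| < 3 -> connected_on e (~: S).
Proof.
move=> cS x y; rewrite !inE => xS yS.
have Rsym : connect_sym [rel a b | [&& e a b, a \in ~: S & b \in ~: S]].
  by apply: sym_connect_sym => a b /=; rewrite sym_e (andbC (a \in _)).
case: (boolP [exists w, (w \notin S) && (p w \notin S)]).
  case/existsP => w /andP [wS pwS].
  by apply: connect_trans (reach_pair wS pwS xS) _; rewrite Rsym; apply: reach_pair.
rewrite negb_exists => /forallP nw.
have sub : [set: T] \subset S :|: p @: S.
  by apply/subsetP => t _; move: (nw t); rewrite inE mem_imset_pairing negb_and !negbK.
have := subset_leq_card sub; rewrite cardsT.
have := cardsU S (p @: S); rewrite (card_imset S pinj) => h1 h2.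
have n2 : n = 2 by have := half_gt1; lia.
case: (eqVneq x y) => [->|xy]; first exact: connect0.
apply: connect1; rewrite /= !inE xS yS !andbT; apply: contraT => nexy; exfalso.
apply: (no_indep (S := [set x; y])); last by rewrite cards2 xy n2.
apply/forallP => a; apply/implyP; rewrite !inE => ha.
apply/forallP => b; apply/implyP; rewrite !inE => hb.
by case/orP: ha => /eqP ->; case/orP: hb => /eqP ->; rewrite ?irr_e // sym_e.
Qed.

(* Hence G is bicritical: G - u - v has the perfect matching given by a
   rematching of u with v. *)
Lemma bicritical_of_squared : bicritical e.
Proof.
have /card_gt0P [x0 _] : 0 < #|T| by apply: leq_trans card_gt3.
split; first by exists x0, (p x0).
move=> u v /rematch [q qR]; have [qP _ qE] := qR.
exists [set [set t; q t] | t in ~: [set u; v]].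
apply: matching_of_pairing qP (rematching_closed qR) _ => t.
by move=> ht; apply: qE; move: ht; rewrite !inE.
Qed.

Lemma brick_of_squared : brick e.
Proof.
split; last exact: bicritical_of_squared.
by split; [exact: card_gt3 | exact: connected_avoiding].
Qed.

(* Every edge {x, y} lies in the perfect matching given by a rematching of
   x with y. *)
Lemma one_extendable_of_squared : one_extendable e.
Proof.
split.
- by have := connected_avoiding (S := set0); rewrite cards0 setC0; apply.
- exact: card_gt3.
- by exists [set [set t; p t] | t in [set: T]]; apply: matching_of_pairing.
move=> E /existsP [x /existsP [y /andP [exy /eqP ->]]].
have xy : x != y by apply: contraTneq exy => ->; rewrite irr_e.
have [q [qP qx qE]] := rematch xy; have [qK _] := qP.
exists [set [set t; q t] | t in [set: T]]; split; last first.
  by rewrite -qx; apply: imset_f; rewrite inE.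
apply: matching_of_pairing => // t _.
case: (eqVneq t x) => [->|tx]; first by rewrite qx.
case: (eqVneq t y) => [->|ty]; first by rewrite -qx qK sym_e qx.
by apply: qE; rewrite !inE negb_or tx ty.
Qed.

End NoIndependentHalf.
End SquaredPairing.

Theorem lemma2p5 (T : finType) (e : rel T) (n : nat) :
  simple_graph e ->
  #|T| = (2 * n)%N ->
  has_perfect_matching e ->
  max_forcing_number e = (n - 1)%N ->
  (in_Kplus e n <-> exists S : {set T}, independent e S /\ #|S| = n) /\
  (~ in_Kplus e n -> brick e /\ one_extendable e).
Proof.
move=> [sym_e irr_e] cT [M0 pm0] maxF.
have [M pmM fM] : exists2 M, perfect_matching e M & forcing_number e M = n - 1.
  have gt0 : 0 < #|perfect_matching e| by apply/card_gt0P; exists M0.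
  have [M pmM EM] := eq_bigmax_cond (forcing_number e) gt0.
  by exists M; rewrite // -maxF -EM.
have pP := partner_pairing irr_e pmM.
have pE := partner_edge sym_e irr_e pmM.
have pS := alternating_squares sym_e irr_e pmM cT (eq_leq (esym fM)).
split; first exact: (kplus_iff_independent pP pE pS cT).
move=> notK; have no_indep S : independent e S -> #|S| = n -> False.
  by move=> iS cS; apply/notK/(kplus_of_independent pP pE pS cT iS cS).
split; first exact: (brick_of_squared sym_e irr_e pP pE pS cT no_indep).
exact: (one_extendable_of_squared sym_e irr_e pP pE pS cT no_indep).
Qed.
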